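(* Let $P$ be a priority forest on $[n]_0$. The edge labeling of $I_P=[\hat0,P]$ given by the labels $\lambda$ (whose sequences along maximal chains are the Jordan–Hölder permutations) is an EL-labeling.
   Context: $[n]_0=\{0,\dots,n\}$. A priority forest on $[n]_0$ is a rooted forest with vertex set $[n]_0$ whose component trees $T_0,T_1,\dots$ are increasing (each non-root vertex has a larger label than its parent) and satisfy: for $j<k$ every label of $T_j$ is smaller than every label of $T_k$. $\Pi(n)$ is the poset of priority forests on $[n]_0$ ordered by inclusion of edge sets, with an extra top element; $\hat0$ is the edgeless forest. For priority forests $Q\lessdot Q'$ (i.e. $Q'$ is obtained from $Q$ by adding one edge), the label $\lambda(Q,Q')$ is the larger endpoint of the unique edge in $E(Q')\setminus E(Q)$. For a maximal chain $x=s_0\lessdot s_1\lessdot\cdots\lessdot s_k=y$ of an interval $[x,y]$, its label sequence is $(\lambda(s_0,s_1),\dots,\lambda(s_{k-1},s_k))$; the chain is increasing if this sequence is weakly increasing. An edge labeling of a poset is an EL-labeling if every interval $[x,y]$ has exactly one increasing maximal chain, and this chain's label sequence is lexicographically smaller than that of every other maximal chain of $[x,y]$. *)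

From mathcomp Require Import all_boot all_order.
Set Implicit Arguments. Unset Strict Implicit. Unset Printing Implicit Defensive.

(* Vertices of [n]_0 = {0,...,n} are 'I_n.+1.  A (rooted, increasing) forest
   is given by its edge set: an edge (p, c) joins parent p to child c with p < c. *)
Definition vert (n : nat) := 'I_n.+1.
Definition edge (n : nat) := (vert n * vert n)%type.
Definition forest (n : nat) := {set edge n}.

Definition adj n (F : forest n) : rel (vert n) :=
  fun u v => ((u, v) \in F) || ((v, u) \in F).

Definition samecomp n (F : forest n) (u v : vert n) : bool := connect (adj F) u v.

(* Priority forest: a rooted forest whose trees are increasing (every edge goes
   from a parent to a larger child, every vertex has at most one parent), and whose
   trees can be listed T_0, T_1, ... with all labels of T_j smaller than all labels
   of T_k for j < k: i.e. if x < y lie in different trees then every label of the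
   tree of x is smaller than every label of the tree of y. *)
Definition priority_forest n (F : forest n) : Prop :=
  [/\ (forall e, e \in F -> (e.1 < e.2)%N),
      (forall p1 p2 c, (p1, c) \in F -> (p2, c) \in F -> p1 = p2)
    & (forall x y u v, ~~ samecomp F x y -> (x < y)%N ->
         samecomp F x u -> samecomp F y v -> (u < v)%N)].

(* Cover relation Q <. Q' in the poset Pi(n) (top element irrelevant here). *)
Definition pf_cover n (Q Q' : forest n) : Prop :=
  [/\ priority_forest Q, priority_forest Q', Q \proper Q'
    & forall R : forest n, priority_forest R -> ~ (Q \proper R /\ R \proper Q')].

(* label: larger endpoint of the edge in E(Q') \ E(Q) (unique for a cover) *)
Definition pf_label n (Q Q' : forest n) : nat :=
  \max_(e in Q' :\: Q) (nat_of_ord e.2).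

(* the chain x = s_0 <. s_1 <. ... <. s_k, given as x and the list [s_1;...;s_k] *)
Fixpoint is_cover_chain n (x : forest n) (c : seq (forest n)) : Prop :=
  match c with
  | [::] => True
  | y :: c' => pf_cover x y /\ is_cover_chain y c'
  end.

Definition maximal_chain n (x y : forest n) (c : seq (forest n)) : Prop :=
  is_cover_chain x c /\ last x c = y.

Definition label_seq n (x : forest n) (c : seq (forest n)) : seq nat :=
  pairmap (@pf_label n) x c.

Definition increasing_chain n (x : forest n) (c : seq (forest n)) : Prop :=
  sorted leq (label_seq x c).

Fixpoint lexlt (s t : seq nat) : bool :=
  match s, t with
  | _, [::] => false
  | [::], _ :: _ => true
  | a :: s', b :: t' => (a < b)%N || ((a == b) && lexlt s' t')
  end.

Definition EL_labeling_of_interval n (P : forest n) : Prop :=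
  forall x y : forest n,
    priority_forest x -> priority_forest y -> x \subset y -> y \subset P ->
    exists c, [/\ maximal_chain x y c, increasing_chain x c,
      (forall c', maximal_chain x y c' -> increasing_chain x c' -> c' = c)
    & (forall c', maximal_chain x y c' -> c' <> c ->
         lexlt (label_seq x c) (label_seq x c'))].

From mathcomp Require Import all_boot all_order.

Set Implicit Arguments. Unset Strict Implicit. Unset Printing Implicit Defensive.

(* A forest with increasing edges and unique parents is a priority forest
   exactly when no root lies strictly between the endpoints of an edge: then
   every root below v is below the root of the tree of v, so the root map is
   monotone and separates the trees in order.  This condition survives adding
   to x <= y the edge of y \ x with the smallest child.  Hence a cover adds a
   single edge, labelled by its child, and the labels along a maximal chain of
   [x, y] are the distinct children of the edges of y \ x.  A chain that does
   not start with the minimal edge has a larger first label and meets the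
   minimal child later, so it is neither increasing nor lexicographically
   first; induction on |y \ x| does the rest. *)

Section IncreasingForest.
Variables (n : nat) (F : forest n).
Implicit Types (u v w p c r : vert n).

Definition increasing_edges := forall e, e \in F -> (e.1 < e.2)%N.
Definition unique_parent := forall p1 p2 c, (p1, c) \in F -> (p2, c) \in F -> p1 = p2.
Definition is_root v := [forall p, (p, v) \notin F].
Definition trees_ordered := forall a b u v, ~~ samecomp F a b -> (a < b)%N ->
  samecomp F a u -> samecomp F b v -> (u < v)%N.
Definition no_root_inside_edges :=
  forall p c w, (p, c) \in F -> (p < w < c)%N -> ~~ is_root w.

Definition parent v := if [pick p | (p, v) \in F] is Some p then p else v.
(* [parent] decreases labels until it reaches a root, so n.+1 steps suffice. *)
Definition root_of v := iter n.+1 parent v.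

Lemma not_rootP w : reflect (exists p, (p, w) \in F) (~~ is_root w).
Proof.
rewrite negb_forall.
by apply: (iffP existsP) => -[p pw]; exists p; rewrite ?negbK in pw *.
Qed.

Lemma parentP v : parent v = v \/ (parent v, v) \in F.
Proof. by rewrite /parent; case: pickP => [p ->|_]; [right | left]. Qed.

Lemma parent_root v : is_root v -> parent v = v.
Proof.
move=> /forallP root_v; rewrite /parent; case: pickP => // q.
by rewrite (negbTE (root_v q)).
Qed.

Lemma connect_parent v : connect (adj F) v (parent v).
Proof. by case: (parentP v) => [-> // | e]; rewrite connect1 // /adj e orbT. Qed.

Lemma samecomp_iter_parent k v : samecomp F v (iter k parent v).
Proof.
elim: k => [|k IH]; first exact: connect0.
by rewrite iterS; apply: connect_trans IH (connect_parent _).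
Qed.

Hypothesis incrF : increasing_edges.

Lemma leq_parent v : (parent v <= v)%N.
Proof. by case: (parentP v) => [-> // | /incrF /ltnW]. Qed.

Lemma leq_iter_parent k v : (iter k parent v <= v)%N.
Proof. by elim: k => //= k IH; apply: leq_trans (leq_parent _) IH. Qed.

Lemma parent_fixed_root v : parent v = v -> is_root v.
Proof.
move=> fix_v; apply/forallP => p; apply/negP => pv; move: fix_v.
rewrite /parent; case: pickP => [q /incrF /= qv eq_qv | /(_ p)].
  by rewrite eq_qv ltnn in qv.
by rewrite pv.
Qed.

Lemma parent_iter_parent k v : (v < k)%N ->
  parent (iter k parent v) = iter k parent v.
Proof.
elim: k v => // k IH v lt_v_k; rewrite iterSr.
have [fix_v | edge_v] := parentP v; first by rewrite fix_v iter_fix.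
have /= lt_pv := incrF edge_v; exact: IH (leq_trans lt_pv lt_v_k).
Qed.

Lemma root_of_parent v : root_of (parent v) = root_of v.
Proof. by rewrite /root_of -iterSr iterS parent_iter_parent. Qed.

Lemma is_root_root_of v : is_root (root_of v).
Proof. exact/parent_fixed_root/parent_iter_parent. Qed.

Hypothesis uniqF : unique_parent.

Lemma parent_edge p c : (p, c) \in F -> parent c = p.
Proof.
move=> pc; rewrite /parent; case: pickP => [q qc | /(_ p)]; last by rewrite pc.
exact: uniqF qc pc.
Qed.

Lemma root_of_samecomp u v : samecomp F u v -> root_of u = root_of v.
Proof.
move=> uv; have cl : closed (adj F) [pred w | root_of w == root_of u].
  by move=> w w' /orP[] /parent_edge <-; rewrite !inE root_of_parent.
by have := closed_connect cl uv; rewrite !inE eqxx eq_sym => /esym/eqP.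
Qed.

Lemma no_root_inside_edges_of_trees_ordered :
  trees_ordered -> no_root_inside_edges.
Proof.
move=> prioF p c w pc /andP[lt_pw lt_wc]; apply/negP => root_w.
have [pw | not_pw] := boolP (samecomp F p w).
  have root_of_w : root_of w = w by rewrite /root_of iter_fix ?parent_root.
  have := leq_iter_parent n.+1 p; rewrite -/(root_of p) (root_of_samecomp pw).
  by rewrite root_of_w leqNgt lt_pw.
have pc_adj : samecomp F p c by rewrite /samecomp connect1 // /adj pc.
by have := prioF p w c w not_pw lt_pw pc_adj (connect0 _ _); rewrite ltnNge ltnW.
Qed.

Hypothesis rootsF : no_root_inside_edges.

Lemma root_leq_iter_parent k r v : is_root r -> (r <= v)%N ->
  (r <= iter k parent v)%N.
Proof.
move=> root_r; elim: k => //= k IH /IH; set w := iter k parent v => le_r_w.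
have [-> // | edge_w] := parentP w; rewrite leqNgt; apply/negP => lt_pw_r.
have [eq_r_w | lt_r_w] := eqVneq (r : nat) w.
  by move/forallP: root_r => /(_ (parent w)); rewrite (val_inj eq_r_w) edge_w.
have := @rootsF _ _ r edge_w; rewrite lt_pw_r ltn_neqAle lt_r_w le_r_w => /(_ isT).
by rewrite root_r.
Qed.

Lemma leq_root_of_mono u v : (u <= v)%N -> (root_of u <= root_of v)%N.
Proof.
move=> le_uv; apply: root_leq_iter_parent (is_root_root_of u) _.
exact: leq_trans (leq_iter_parent _ _) le_uv.
Qed.

Lemma adj_connect_sym : connect_sym (adj F).
Proof. by apply: sym_connect_sym => a b; rewrite /adj orbC. Qed.

Lemma trees_ordered_of_no_root_inside_edges : trees_ordered.
Proof.
move=> a b u v not_ab lt_ab au bv; rewrite ltnNge; apply/negP => le_vu.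
have neq_roots : (root_of a : nat) != root_of b.
  apply: contraNneq not_ab => /val_inj eq_roots.
  apply: (connect_trans (samecomp_iter_parent n.+1 a)).
  by rewrite -/(root_of a) eq_roots adj_connect_sym; apply: samecomp_iter_parent.
move/negP: neq_roots; apply; rewrite eqn_leq (leq_root_of_mono (ltnW lt_ab)) /=.
by rewrite (root_of_samecomp au) (root_of_samecomp bv) (leq_root_of_mono le_vu).
Qed.

End IncreasingForest.

Lemma priority_forestP n (F : forest n) : priority_forest F <->
  [/\ increasing_edges F, unique_parent F & no_root_inside_edges F].
Proof.
split=> [[incrF uniqF orderedF] | [incrF uniqF rootsF]]; split=> //.
  exact: no_root_inside_edges_of_trees_ordered.
exact: trees_ordered_of_no_root_inside_edges.
Qed.

Section Covers.
Variable n : nat.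
Implicit Types (x y s : forest n) (e f : edge n).

Lemma child_inj y e f : unique_parent y -> e \in y -> f \in y -> e.2 = f.2 -> e = f.
Proof.
case: e f => p c [q d] uniqy ey fy /= eq_cd; rewrite eq_cd in ey *.
by rewrite (uniqy _ _ _ ey fy).
Qed.

Lemma min_child_edge (A : {set edge n}) : A != set0 ->
  exists2 e, e \in A & forall f, f \in A -> (e.2 <= f.2)%N.
Proof.
by case/set0Pn=> e eA; case: (arg_minnP (fun f : edge n => val f.2) eA) => f; exists f.
Qed.

Lemma priority_forest_setU1 x y e :
  priority_forest x -> priority_forest y -> x \subset y -> e \in y :\: x ->
  (forall f, f \in y :\: x -> (e.2 <= f.2)%N) -> priority_forest (e |: x).
Proof.
move=> /priority_forestP[_ _ rootsx] /priority_forestP[incry uniqy rootsy] sxy.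
move=> /setDP[ey _] min_e.
have /subsetP sub : e |: x \subset y by rewrite subUset sub1set ey sxy.
apply/priority_forestP; split.
- by move=> f /sub /incry.
- by move=> p1 p2 c /sub pc1 /sub /(uniqy _ _ _ pc1).
move=> p c w; rewrite in_setU1 => /orP[/eqP pc_e | pc_x] pwc; apply/not_rootP.
  subst e; have /not_rootP[q qw] := rootsy p c w ey pwc.
  exists q; rewrite in_setU1; apply/orP; right; apply: contraT => qwx.
  have := min_e (q, w); rewrite inE qwx qw /= => /(_ isT).
  by rewrite leqNgt; case/andP: pwc => _ ->.
have /not_rootP[q qw] := rootsx p c w pc_x pwc.
by exists q; rewrite in_setU1 qw orbT.
Qed.

Lemma pf_cover_setU1 x e : priority_forest x -> priority_forest (e |: x) ->
  e \notin x -> pf_cover x (e |: x).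
Proof.
move=> px pex ex; split=> //; first by rewrite properUr // sub1set.
move=> R _ [/proper_card ltxR /proper_card ltRex].
by move: ltRex; rewrite cardsU1 ex ltnNge ltxR.
Qed.

Lemma pf_cover_is_setU1 x s : pf_cover x s -> exists2 e, e \notin x & s = e |: x.
Proof.
case=> px ps /[dup] ltxs /properP[sxs _] no_between.
have /min_child_edge[e esx min_e] : s :\: x != set0.
  by rewrite setD_eq0; case/andP: ltxs.
have pex := priority_forest_setU1 px ps sxs esx min_e.
have /setDP[es ex] := esx; exists e => //.
apply/esym/eqP; rewrite eqEproper subUset sub1set es sxs /=; apply/negP => ltexs.
by apply: (no_between _ pex); rewrite properUr ?sub1set.
Qed.

Lemma pf_label_setU1 x e : e \notin x -> pf_label x (e |: x) = e.2.
Proof.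
move=> ex; rewrite /pf_label setDUl setDv setU0.
by rewrite (setDidPl _) ?disjoints1 ?big_set1.
Qed.

Lemma cover_chain_subset x c : is_cover_chain x c -> x \subset last x c.
Proof.
elim: c x => [|s c IH] x /=; first by rewrite subxx.
by case=> -[_ _ /proper_sub sxs _] /IH; apply: subset_trans.
Qed.

Lemma maximal_chain_refl x c : maximal_chain x x c -> c = [::].
Proof.
case: c => // s c [[[_ _ ltxs _] /cover_chain_subset ssx] /= lx].
by move: (proper_sub_trans ltxs ssx); rewrite lx properxx.
Qed.

Lemma maximal_chain_cons x y s c : maximal_chain x y (s :: c) ->
  exists2 e, e \in y :\: x & [/\ s = e |: x, maximal_chain s y c
                             & label_seq x (s :: c) = (e.2 : nat) :: label_seq s c].
Proof.
case=> -[/pf_cover_is_setU1[e ex ->] cs] ly.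
have sy : e |: x \subset y by rewrite -ly; apply: cover_chain_subset.
exists e; first by rewrite inE ex (subsetP sy) ?setU11.
by split=> //; rewrite /label_seq /= pf_label_setU1.
Qed.

Lemma mem_label_seq x y c : maximal_chain x y c ->
  label_seq x c =i [seq (e.2 : nat) | e in y :\: x].
Proof.
elim: c x => [|s c IH] x.
  by case=> _ /= <- l; rewrite setDv; apply/esym/imageP => -[e]; rewrite inE.
case/maximal_chain_cons=> e /setDP[ey ex] [-> /IH {}IH ->] l.
rewrite inE IH; apply/idP/imageP => [/orP[/eqP -> | /imageP[f]] | [f]].
- by exists e => //; apply/setDP.
- move=> /setDP[fy]; rewrite in_setU1 negb_or => /andP[_ fx] ->.
  by exists f => //; apply/setDP.
move=> /setDP[fy fx] ->; have [-> | nfe] := eqVneq f e; first by rewrite eqxx.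
apply/orP; right; apply/imageP; exists f => //.
by rewrite in_setD in_setU1 negb_or nfe fx fy.
Qed.

End Covers.

Definition EL_interval n (x y : forest n) : Prop :=
  exists c, [/\ maximal_chain x y c, increasing_chain x c,
    (forall c', maximal_chain x y c' -> increasing_chain x c' -> c' = c)
  & (forall c', maximal_chain x y c' -> c' <> c ->
       lexlt (label_seq x c) (label_seq x c'))].

Lemma EL_interval_refl n (x : forest n) : EL_interval x x.
Proof. by exists [::]; split=> // c' /maximal_chain_refl. Qed.

Section MinimalEdgeFirst.
Variables (n : nat) (x y : forest n) (e0 : edge n).
Hypotheses (py : priority_forest y) (e0_yx : e0 \in y :\: x)
  (min_e0 : forall f, f \in y :\: x -> (e0.2 <= f.2)%N).
Let x0 := e0 |: x.

Lemma label_seq_min_first s c : maximal_chain x y (s :: c) -> s != x0 ->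
  exists2 l, label_seq x (s :: c) = l :: label_seq s c &
             (e0.2 < l)%N && ((e0.2 : nat) \in label_seq s c).
Proof.
case/maximal_chain_cons=> e e_yx [-> msc ->] ne_x0; have /setDP[ey _] := e_yx.
have ne_e : e != e0 by apply: contraNneq ne_x0 => ->.
have /setDP[e0y e0x] := e0_yx.
exists e.2 => //; rewrite ltn_neqAle min_e0 // andbT (mem_label_seq msc).
apply/andP; split.
  apply: contra ne_e => /eqP/val_inj eq2; apply/eqP.
  by case/priority_forestP: py => _ uniqy _; apply: child_inj uniqy ey e0y (esym eq2).
by apply/imageP; exists e0; rewrite // in_setD in_setU1 negb_or eq_sym ne_e e0x e0y.
Qed.

Hypotheses (px : priority_forest x) (sxy : x \subset y).

Lemma EL_interval_min_first : EL_interval x0 y -> EL_interval x y.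
Proof.
case=> c0 [mc0 ic0 uniq_c0 lex_c0].
have ls0 c : label_seq x (x0 :: c) = (e0.2 : nat) :: label_seq x0 c.
  by rewrite /label_seq /= pf_label_setU1 //; case/setDP: e0_yx.
have chain_nil c : maximal_chain x y c -> c <> [::].
  by case=> _ ly c_nil; move: e0_yx; rewrite -ly c_nil setDv inE.
have tail_x0 c : maximal_chain x y (x0 :: c) -> maximal_chain x0 y c.
  by case/maximal_chain_cons=> e _ [].
exists (x0 :: c0); split.
- case: mc0 => cs ly; split=> //; split=> //; apply: pf_cover_setU1 => //.
    exact: (priority_forest_setU1 px py sxy e0_yx min_e0).
  by case/setDP: e0_yx.
- rewrite /increasing_chain ls0 /= path_sortedE; last exact: leq_trans.
  rewrite ic0 andbT; apply/allP => l.
  rewrite (mem_label_seq mc0) => /imageP[f f_yx0 ->].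
  by apply: min_e0; apply: (subsetP (setDS y (subsetUr [set e0] x))).
- case=> [|s c] mc ic; first by case: (chain_nil _ mc).
  have [eq_s | ne_x0] := eqVneq s x0.
    subst s; congr cons; apply: uniq_c0; first exact: tail_x0.
    by move: ic; rewrite /increasing_chain ls0 => /path_sorted.
  have [l ls /andP[lt_l mem_e0]] := label_seq_min_first mc ne_x0.
  move: ic; rewrite /increasing_chain ls /= path_sortedE; last exact: leq_trans.
  by case/andP=> /allP/(_ _ mem_e0); rewrite leqNgt lt_l.
- case=> [|s c] mc ne; first by case: (chain_nil _ mc).
  rewrite ls0; have [eq_s | ne_x0] := eqVneq s x0.
    subst s; rewrite ls0 /= ltnn eqxx /=; apply: lex_c0; first exact: tail_x0.
    by move=> eq_c; apply: ne; rewrite eq_c.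
  by have [l -> /andP[lt_l _]] := label_seq_min_first mc ne_x0; rewrite /= lt_l.
Qed.

End MinimalEdgeFirst.

Lemma EL_interval_subset n (x y : forest n) :
  priority_forest x -> priority_forest y -> x \subset y -> EL_interval x y.
Proof.
move=> px py; have [k] := ubnP #|y :\: x|; elim: k x px => // k IH x px lt_k sxy.
case: (eqVneq (y :\: x) set0) => [yx0 | /min_child_edge[e0 e0_yx min_e0]].
  suff -> : y = x by apply: EL_interval_refl.
  by apply/eqP; rewrite eqEsubset -setD_eq0 yx0 eqxx sxy.
apply: (EL_interval_min_first py e0_yx min_e0 px sxy); apply: IH.
- exact: (priority_forest_setU1 px py sxy e0_yx min_e0).
- by move: lt_k; rewrite (cardsD1 e0 (y :\: x)) e0_yx setDDl setUC ltnS.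
- by rewrite subUset sub1set sxy; case/setDP: e0_yx => ->.
Qed.

Theorem lemma5p7 (n : nat) (P : forest n) :
  priority_forest P -> EL_labeling_of_interval P.
Proof. by move=> _ x y px py sxy _; apply: EL_interval_subset. Qed.
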